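(* Let $c>0$ and $C>0$ be constants, $\theta=c/n$, $p\le Cn\log n$, and let $X$ be an $n\times p$ Bernoulli–subgaussian random matrix with parameter $\theta$. Then the probability that $X$ has three distinct columns that are aligned is $o(1)$ as $n\to\infty$.
   Context: An $n\times p$ Bernoulli–subgaussian random matrix with parameter $\theta\in(0,1]$ is a matrix $X=(x_{ij})$ with iid entries $x_{ij}=\chi_{ij}\xi_{ij}$, where the $\chi_{ij}$ are iid indicator random variables with $\mathbb{P}(\chi_{ij}=1)=\theta$, the $\xi_{ij}$ are iid random variables independent of the $\chi$'s, with mean $0$, variance at most $1$, $\mathbb{E}|\xi_{ij}|\in[1/10,1]$, and $\mathbb{P}(|\xi_{ij}|\ge t)\le 2\exp(-t^2/2)$ for all $t>0$. A set of columns is called aligned if each of them has more than one nonzero entry and their nonzero entries occur in exactly the same positions (identical supports). *)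

From mathcomp Require Import all_boot.
From Stdlib Require Import Reals.
Set Implicit Arguments. Unset Strict Implicit. Unset Printing Implicit Defensive.

Definition pattern (n p : nat) := {ffun 'I_n * 'I_p -> bool}.

Definition col_support n p (M : pattern n p) (j : 'I_p) : {set 'I_n} :=
  [set i | M (i, j)].

Definition three_aligned n p (M : pattern n p) : bool :=
  [exists j1 : 'I_p, exists j2 : 'I_p, exists j3 : 'I_p,
    [&& j1 != j2, j1 != j3, j2 != j3,
        1 < #|col_support M j1|, 1 < #|col_support M j2|, 1 < #|col_support M j3|,
        col_support M j1 == col_support M j2 &
        col_support M j1 == col_support M j3]].

(* Entrywise conjunction: x_ij = chi_ij * xi_ij is nonzero iff chi_ij = 1 and xi_ij <> 0. *)
Definition pand n p (A B : pattern n p) : pattern n p := [ffun k => A k && B k].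

Definition sumR (T : Type) (s : seq T) (f : T -> R) : R :=
  foldr (fun x acc => (f x + acc)%R) 0%R s.
Definition prodR (T : Type) (s : seq T) (f : T -> R) : R :=
  foldr (fun x acc => (f x * acc)%R) 1%R s.

Definition bern (t : R) (b : bool) : R := if b then t else (1 - t)%R.

(* Probability that the n x p Bernoulli-subgaussian matrix X with parameter theta
   has three distinct aligned columns, where q = P(xi_ij <> 0).  The event depends
   on X only through the indicators chi_ij (iid Bernoulli(theta)) and
   [xi_ij <> 0] (iid Bernoulli(q), independent of the chi's). *)
Definition prob_three_aligned (n p : nat) (theta q : R) : R :=
  sumR (enum [set: pattern n p]) (fun A =>
  sumR (enum [set: pattern n p]) (fun B =>
    (prodR (enum [set: 'I_n * 'I_p]) (fun k => bern theta (A k) * bern q (B k))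
     * (if three_aligned (pand A B) then 1 else 0))%R)).

(* A union bound over pairs of rows and triples of distinct columns: three aligned
   columns contain a 2 x 3 block of nonzero entries, and each fixed block is nonzero
   with probability (theta q)^6.  Hence the probability is at most
   p^3 n^2 (c/n)^6 <= C^3 c^6 (ln n)^3 / n, which tends to 0 since
   ln n <= 4 n^(1/4). *)
From mathcomp Require Import all_boot all_order all_algebra Rstruct.
From Stdlib Require Import Reals Lra.
Import Order.TTheory GRing.Theory Num.Theory.

Set Implicit Arguments.
Unset Strict Implicit.
Unset Printing Implicit Defensive.

Section UnionBound.
Local Open Scope ring_scope.

Lemma sumR_big (T : Type) (s : seq T) (f : T -> R) : sumR s f = \sum_(x <- s) f x.
Proof. by elim: s => [|x s IH]; rewrite ?big_nil // big_cons -IH. Qed.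

Lemma prodR_big (T : Type) (s : seq T) (f : T -> R) : prodR s f = \prod_(x <- s) f x.
Proof. by elim: s => [|x s IH]; rewrite ?big_nil // big_cons -IH. Qed.

Lemma big_enum_setT (T : finType) (op : SemiGroup.com_law R) (idx : R) (f : T -> R) :
  \big[op/idx]_(x <- enum [set: T]) f x = \big[op/idx]_x f x.
Proof. by rewrite big_enum; apply: eq_bigl => x; rewrite in_setT. Qed.

Lemma bern_ge0 t b : 0 <= t <= 1 -> 0 <= bern t b.
Proof. by case/andP=> t_ge0 t_le1; case: b => //=; rewrite subr_ge0. Qed.

Lemma sum_bern_indicator t (b : bool) :
  \sum_(x : bool) bern t x * (if b then x%:R else 1) = if b then t else 1.
Proof. by rewrite big_bool; case: b; rewrite /= ?mulr1 ?mulr0 ?addr0 // addrC subrK. Qed.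

Lemma sum_bern_prod_indicator (I : finType) t (K : {set I}) :
  \sum_(A : {ffun I -> bool}) (\prod_k bern t (A k)) * \prod_(k in K) (A k)%:R
  = t ^+ #|K|.
Proof.
transitivity (\sum_(A : {ffun I -> bool})
                \prod_k (bern t (A k) * (if k \in K then (A k)%:R else 1))).
  by apply: eq_bigr => A _; rewrite [X in _ * X]big_mkcond -big_split.
rewrite -(bigA_distr_bigA (fun k b => bern t b * (if k \in K then b%:R else 1))) /=.
under eq_bigr => k _ do rewrite sum_bern_indicator.
by rewrite -big_mkcond prodr_const.
Qed.

Lemma sum_bern2_prod_indicator (I : finType) t q (K : {set I}) :
  \sum_(A : {ffun I -> bool}) \sum_(B : {ffun I -> bool})
    (\prod_k (bern t (A k) * bern q (B k))) * \prod_(k in K) ((A k)%:R * (B k)%:R)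
  = (t * q) ^+ #|K|.
Proof.
rewrite exprMn -(sum_bern_prod_indicator t K) mulr_suml.
apply: eq_bigr => A _; rewrite -(sum_bern_prod_indicator q K) mulr_sumr.
apply: eq_bigr => B _; rewrite !big_split /=.
by rewrite mulrACA.
Qed.

Definition aligned_witness n p := (('I_p * 'I_p * 'I_p) * ('I_n * 'I_n))%type.

Definition witness_distinct n p (x : aligned_witness n p) : bool :=
  [&& x.1.1.1 != x.1.1.2, x.1.1.1 != x.1.2, x.1.1.2 != x.1.2 & x.2.1 != x.2.2].

Definition witness_cells n p (x : aligned_witness n p) : {set 'I_n * 'I_p} :=
  setX [set x.2.1; x.2.2] [set x.1.1.1; x.1.1.2; x.1.2].

Lemma card_witness_cells n p (x : aligned_witness n p) :
  witness_distinct x -> #|witness_cells x| = 6%N.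
Proof.
case: x => [[[j1 j2] j3] [i1 i2]] /and4P[/= j12 j13 j23 i12].
rewrite /witness_cells cardsX cards2 i12 -setUA cardsU1 cards2 in_set2 j23.
by rewrite negb_or j12 j13.
Qed.

Lemma three_aligned_le_sum_witnesses n p (M : pattern n p) :
  (if three_aligned M then 1 else 0) <=
  \sum_(x : aligned_witness n p | witness_distinct x)
    \prod_(k in witness_cells x) ((M k)%:R : R).
Proof.
have terms_ge0 (P : pred (aligned_witness n p)) :
    0 <= \sum_(x | P x) \prod_(k in witness_cells x) ((M k)%:R : R).
  by apply: sumr_ge0 => x _; apply: prodr_ge0 => k _; apply: ler0n.
case: ifP => // /existsP[j1 /existsP[j2 /existsP[j3]]].
case/and5P=> j12 j13 j23 supp1 /and4P[_ _ /eqP supp12 /eqP supp13].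
have /card_gt1P[i1 [i2 [i1_in i2_in i12]]] := supp1.
pose x : aligned_witness n p := ((j1, j2, j3), (i1, i2)).
have x_distinct : witness_distinct x by apply/and4P.
have cells_on : forall k, k \in witness_cells x -> M k.
  move=> [i j] /setXP[/= i_in j_in].
  have supp_j : col_support M j = col_support M j1.
    by move: j_in; rewrite !inE -orbA => /or3P[]/eqP->.
  have : i \in col_support M j by rewrite supp_j; case/set2P: i_in => ->.
  by rewrite inE.
rewrite (bigD1 x) // big1 => [|k /cells_on -> //].
by rewrite lerDl terms_ge0.
Qed.

Lemma three_aligned_pand_le n p (A B : pattern n p) :
  (if three_aligned (pand A B) then 1 else 0) <=
  \sum_(x : aligned_witness n p | witness_distinct x)
    \prod_(k in witness_cells x) (((A k)%:R : R) * (B k)%:R).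
Proof.
have pand_cells (x : aligned_witness n p) :
    \prod_(k in witness_cells x) (((pand A B) k)%:R : R)
    = \prod_(k in witness_cells x) ((A k)%:R * (B k)%:R).
  by apply: eq_bigr => k _; rewrite ffunE; case: (A k) (B k) => [] []; rewrite ?mulr1 ?mulr0.
rewrite -(eq_bigr _ (fun x _ => pand_cells x)).
exact: three_aligned_le_sum_witnesses.
Qed.

Lemma prob_three_aligned_le n p t q : 0 <= t <= 1 -> 0 <= q <= 1 ->
  prob_three_aligned n p t q <= p%:R ^+ 3 * n%:R ^+ 2 * (t * q) ^+ 6.
Proof.
move=> t01 q01; rewrite /prob_three_aligned sumR_big big_enum_setT.
under eq_bigr => A _ do rewrite sumR_big big_enum_setT.
under eq_bigr => A _ do under eq_bigr => B _ do rewrite prodR_big big_enum_setT.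
apply: le_trans (_ : _ <= \sum_(A : pattern n p) \sum_(B : pattern n p)
    (\prod_k (bern t (A k) * bern q (B k))) *
    \sum_(x : aligned_witness n p | witness_distinct x)
      \prod_(k in witness_cells x) ((A k)%:R * (B k)%:R)) _.
  apply: ler_sum => A _; apply: ler_sum => B _; apply: ler_wpM2l.
    by apply: prodr_ge0 => k _; apply: mulr_ge0; apply: bern_ge0.
  exact: three_aligned_pand_le.
under eq_bigr => A _ do under eq_bigr => B _ do rewrite mulr_sumr.
under eq_bigr => A _ do rewrite exchange_big.
rewrite exchange_big.
under eq_bigr => x x_distinct do
  rewrite sum_bern2_prod_indicator card_witness_cells //.
have tq6_ge0 : 0 <= (t * q) ^+ 6.
  by case/andP: t01 => t_ge0 _; case/andP: q01 => q_ge0 _; rewrite exprn_ge0 ?mulr_ge0.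
apply: le_trans (_ : _ <= \sum_(x : aligned_witness n p) (t * q) ^+ 6) _.
  by rewrite [leRHS](bigID (@witness_distinct n p)) lerDl sumr_ge0.
rewrite sumr_const -[leLHS]mulr_natl -!natrX -natrM ler_wpM2r // ler_nat.
by rewrite !card_prod !card_ord !expnS expn0 !muln1 !mulnA.
Qed.

End UnionBound.

Section Asymptotics.
Local Open Scope R_scope.

Lemma sqrt_sqrt_pow4 x : 0 <= x -> sqrt (sqrt x) ^ 4 = x.
Proof.
move=> x_ge0; rewrite (_ : 4%nat = 2 * 2)%nat // pow_mult.
by rewrite !pow2_sqrt //; apply: sqrt_pos.
Qed.

Lemma ln_le_4_sqrt_sqrt x : 0 < x -> ln x <= 4 * sqrt (sqrt x).
Proof.
move=> x_gt0; set s := sqrt (sqrt x).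
have s_gt0 : 0 < s by apply/sqrt_lt_R0/sqrt_lt_R0.
have s4 : s ^ 4 = x by apply: sqrt_sqrt_pow4; lra.
have ln_s_lt : ln s < s.
  have := ln_increasing s (exp s) s_gt0 ltac:(have := exp_ineq1 s (Rgt_not_eq s 0 s_gt0); lra).
  by rewrite ln_exp.
by rewrite -{1}s4 ln_pow //=; lra.
Qed.

Lemma lt_sqrt_sqrt K x : 0 <= K -> K ^ 4 < x -> K < sqrt (sqrt x).
Proof.
move=> K_ge0 K4_lt.
have -> : K = sqrt (sqrt (K ^ 4)).
  by rewrite (_ : K ^ 4 = (K ^ 2) ^ 2); [rewrite !sqrt_pow2 //; nra | ring].
by apply/sqrt_lt_1_alt; split; [apply: sqrt_pos | apply/sqrt_lt_1_alt; nra].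
Qed.

Lemma union_bound_le_div_sqrt_sqrt (c C x P tq : R) :
  0 <= c -> 0 <= C -> 1 <= x -> 0 <= P -> P <= C * x * ln x ->
  0 <= tq -> tq <= c / x ->
  P ^ 3 * x ^ 2 * tq ^ 6 <= 64 * C ^ 3 * c ^ 6 / sqrt (sqrt x).
Proof.
move=> c_ge0 C_ge0 x_ge1 P_ge0 P_le tq_ge0 tq_le.
set s := sqrt (sqrt x); set L := ln x.
have s_gt0 : 0 < s by apply/sqrt_lt_R0/sqrt_lt_R0; lra.
have s4 : x = s ^ 4 by rewrite sqrt_sqrt_pow4 //; lra.
have L_ge0 : 0 <= L.
  rewrite /L -ln_1; case: (Req_dec x 1) => [-> | x_ne1]; first lra.
  by apply/Rlt_le/ln_increasing; lra.
have L_le : L <= 4 * s by apply: ln_le_4_sqrt_sqrt; lra.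
have P3_le : P ^ 3 <= (C * x * L) ^ 3 by apply: pow_incr.
have tq6_le : tq ^ 6 <= (c / x) ^ 6 by apply: pow_incr.
have L3_le : L ^ 3 <= (4 * s) ^ 3 by apply: pow_incr.
have bound_eq : (C * x * L) ^ 3 * x ^ 2 * (c / x) ^ 6 = C ^ 3 * c ^ 6 * L ^ 3 / x.
  by field; lra.
have bound_le : C ^ 3 * c ^ 6 * L ^ 3 / x <= 64 * C ^ 3 * c ^ 6 / s.
  have -> : 64 * C ^ 3 * c ^ 6 / s = C ^ 3 * c ^ 6 * (4 * s) ^ 3 / x.
    by rewrite s4; field; lra.
  apply: Rmult_le_compat_r; first by apply/Rlt_le/Rinv_0_lt_compat; lra.
  by apply: Rmult_le_compat_l L3_le; apply: Rmult_le_pos; apply: pow_le.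
apply: Rle_trans bound_le; rewrite -bound_eq.
apply: Rmult_le_compat => //.
- by apply: Rmult_le_pos; apply: pow_le; lra.
- exact: pow_le.
- by apply: Rmult_le_compat_r => //; apply: pow_le; lra.
Qed.

End Asymptotics.

Theorem mainTheorem10 (c C : R) (hc : (0 < c)%R) (hC : (0 < C)%R) :
  forall eps : R, (0 < eps)%R ->
  exists N : nat, forall (n p : nat) (q : R),
    (N <= n)%nat ->
    (INR p <= C * INR n * ln (INR n))%R ->
    (0 <= q <= 1)%R ->
    (prob_three_aligned n p (c / INR n) q < eps)%R.
Proof.
move=> eps eps_gt0.
set K := (64 * C ^ 3 * c ^ 6 / eps)%R.
have K_ge0 : (0 <= K)%R.
  have := pow_lt C 3 hC; have := pow_lt c 6 hc => *.
  by apply: Rlt_le; apply: Rdiv_lt_0_compat; nra.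
have [N N_gt] := INR_archimed 1 (K ^ 4 + c + 1) Rlt_0_1.
exists N => n p q /ssrnat.leP /le_INR N_le_n p_le q01.
have n_gt : (K ^ 4 < INR n)%R by have := pow_le K 4 K_ge0; lra.
have n_ge_c1 : (c + 1 <= INR n)%R by have := pow_le K 4 K_ge0; lra.
have t01 : (0 <= c / INR n <= 1)%R.
  split; first by apply: Rlt_le; apply: Rdiv_lt_0_compat; lra.
  apply: (Rmult_le_reg_r (INR n)); first lra.
  by rewrite /Rdiv Rmult_assoc Rinv_l ?Rmult_1_r; lra.
set t := (c / INR n)%R in t01 *.
apply: (Rle_lt_trans _ (INR p ^ 3 * INR n ^ 2 * (t * q) ^ 6)).
  apply/RleP; rewrite !RpowE !INRE.
  by apply: prob_three_aligned_le; apply/andP; split; apply/RleP; rewrite -?R0E -?R1E; lra.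
have tq_le : (t * q <= c / INR n)%R by rewrite -/t; nra.
apply: Rle_lt_trans (union_bound_le_div_sqrt_sqrt _ _ _ (pos_INR p) p_le _ tq_le) _; try nra.
have := lt_sqrt_sqrt K_ge0 n_gt; set s := sqrt (sqrt (INR n)) => K_lt_s.
rewrite (_ : 64 * C ^ 3 * c ^ 6 = K * eps)%R; last by rewrite /K; field; lra.
apply: (Rmult_lt_reg_r s); first lra.
by rewrite /Rdiv Rmult_assoc Rinv_l; nra.
Qed.
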